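(* In the Classified Reallocation algorithm (with power-of-two laxities), suppose a client $c_i$ is reallocated out of the big channel during the processing of an arrival (because its laxity satisfies $w_i<\tau/2$ after $\tau$ is updated). Let $n$ be the number of active clients at the time of this reallocation and $n'$ the number of active clients at the time of the last allocation of $c_i$ to the big channel. Then $n\ge 2n'$.
   Context: Model: discrete time; each client $c_i$ has arrival time, departure time and laxity $w_i$ (a power of $2$), and must transmit at least once in every $w_i$ consecutive time steps while active; one transmission per channel per time step. A reallocation is a change of the channel of a client. For $x>0$, $\lceil\lceil x\rceil\rceil$ denotes the smallest power of $2$ not smaller than $x$. Classified Reallocation algorithm. Channels: one \emph{big channel} (all its clients transmit with period $\tau/2$) and \emph{$w$-channels} for powers of two $w$ (clients transmit with period $w$; at most $w$ clients; \emph{full} when holding $w$). State: $n$ (active clients, initially $0$), threshold $\tau$ (initially $2$). Arrival of $c_i$: $n\leftarrow n+1$. If $2\lceil\lceil n\rceil\rceil>\tau$: $\tau\leftarrow 2\lceil\lceil n\rceil\rceil$; each big-channel client $c_j$ with $w_j<\tau/2$ is reallocated to the non-full $w_j$-channel of minimum load (a new one reserved if needed); remaining big-channel clients get period $\tau/2$. Then if $w_i\ge\tau$, $c_i$ goes to the big channel; otherwise to the non-full $w_i$-channel of minimum load (new one reserved if needed). Departure of $c_i$ from channel $c$: $n\leftarrow n-1$. If $c$ is not the big channel: release $c$ if empty; otherwise if some $w_i$-channel $c'\ne c$ is not full, move one client from $c'$ to $c$. Then if $2\lceil\lceil n\rceil\rceil<\tau$: $\tau\leftarrow 2\lceil\lceil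 n\rceil\rceil$, big-channel clients get period $\tau/2$, and every $w$-channel with $w>2\tau$ has all its clients reallocated to the big channel and is released. *)

From mathcomp Require Import all_boot.
Set Implicit Arguments. Unset Strict Implicit. Unset Printing Implicit Defensive.

(* A client is a pair (identifier, laxity w). *)
Definition client := (nat * nat)%type.
(* A w-channel is a pair (w, list of its clients). *)
Definition channel := (nat * seq client)%type.

(* Algorithm state: n (active clients), threshold tau, clients of the big
   channel, the currently reserved w-channels, and a ghost field
   [bigt i] = value of n at the last allocation of client i to the big
   channel. *)
Record state := State {
  cnt : nat; tau : nat; big : seq client; chans : seq channel;
  bigt : nat -> nat }.

Definition init : state := State 0 2 [::] [::] (fun _ => 0).

(* ceil-pow2 n: smallest power of 2 not smaller than n (= 1 for n = 0). *)
Definition cpow2 (n : nat) : nat := 2 ^ up_log 2 n.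
Definition is_pow2 (w : nat) : Prop := exists k, w = 2 ^ k.

Definition ch0 : channel := (0, [::]).
Definition nonfull (ch : channel) : bool := size ch.2 < ch.1.

Definition active (s : state) (i : nat) : bool :=
  has (fun c : client => c.1 == i) (big s)
  || has (fun ch : channel => has (fun c : client => c.1 == i) ch.2) (chans s).

Inductive place : seq channel -> client -> seq channel -> Prop :=
| place_exist chs c k :
    k < size chs -> (nth ch0 chs k).1 = c.2 -> nonfull (nth ch0 chs k) ->
    (forall k', k' < size chs -> (nth ch0 chs k').1 = c.2 ->
        nonfull (nth ch0 chs k') ->
        size (nth ch0 chs k).2 <= size (nth ch0 chs k').2) ->
    place chs c (set_nth ch0 chs k (c.2, rcons (nth ch0 chs k).2 c))
| place_new chs c :
    (forall ch, ch \in chs -> ch.1 = c.2 -> ~~ nonfull ch) ->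
    place chs c (rcons chs (c.2, [:: c])).

Inductive place_all : seq channel -> seq client -> seq channel -> Prop :=
| place_all_nil chs : place_all chs [::] chs
| place_all_cons chs c L chs1 chs2 :
    place chs c chs1 -> place_all chs1 L chs2 -> place_all chs (c :: L) chs2.

Inductive event := Arrive of nat & nat (* id, laxity *) | Depart of nat.

Definition upd (f : nat -> nat) (i v : nat) : nat -> nat :=
  fun j => if j == i then v else f j.

(* threshold update on arrival, with n1 the new number of active clients *)
Definition tau_up (t n1 : nat) : nat :=
  if t < 2 * cpow2 n1 then 2 * cpow2 n1 else t.
Definition moved_out (t n1 : nat) (b : seq client) : seq client :=
  if t < 2 * cpow2 n1 then [seq c <- b | c.2 < (2 * cpow2 n1) %/ 2] else [::].
Definition stay_big (t n1 : nat) (b : seq client) : seq client :=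
  if t < 2 * cpow2 n1 then [seq c <- b | ~~ (c.2 < (2 * cpow2 n1) %/ 2)] else b.

Definition delete_nth (chs : seq channel) (k : nat) : seq channel :=
  take k chs ++ drop k.+1 chs.

(* First phase of a departure of client c: remove c from its channel,
   releasing / refilling the channel as prescribed. *)
Inductive remove_client (s : state) (c : client) : seq client -> seq channel -> Prop :=
| rm_big : c \in big s -> remove_client s c (rem c (big s)) (chans s)
| rm_release k :
    k < size (chans s) -> c \in (nth ch0 (chans s) k).2 ->
    rem c (nth ch0 (chans s) k).2 = [::] ->
    remove_client s c (big s) (delete_nth (chans s) k)
| rm_move k k' x :
    k < size (chans s) -> c \in (nth ch0 (chans s) k).2 ->
    rem c (nth ch0 (chans s) k).2 != [::] ->
    k' < size (chans s) -> k' != k -> (nth ch0 (chans s) k').1 = c.2 ->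
    nonfull (nth ch0 (chans s) k') -> x \in (nth ch0 (chans s) k').2 ->
    remove_client s c (big s)
      (set_nth ch0
        (set_nth ch0 (chans s) k
           ((nth ch0 (chans s) k).1, rcons (rem c (nth ch0 (chans s) k).2) x))
        k' ((nth ch0 (chans s) k').1, rem x (nth ch0 (chans s) k').2))
| rm_keep k :
    k < size (chans s) -> c \in (nth ch0 (chans s) k).2 ->
    rem c (nth ch0 (chans s) k).2 != [::] ->
    (forall k', k' < size (chans s) -> k' != k ->
        (nth ch0 (chans s) k').1 = c.2 -> ~~ nonfull (nth ch0 (chans s) k')) ->
    remove_client s c (big s)
      (set_nth ch0 (chans s) k
         ((nth ch0 (chans s) k).1, rem c (nth ch0 (chans s) k).2)).

(* Second phase of a departure: threshold decrease, with n1 = new n. *)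
Definition depart_finish (s : state) (b : seq client) (chs : seq channel) : state :=
  let n1 := (cnt s).-1 in
  if 2 * cpow2 n1 < tau s then
    let t1 := 2 * cpow2 n1 in
    let dumped := flatten [seq ch.2 | ch <- chs & 2 * t1 < ch.1] in
    State n1 t1 (b ++ dumped) [seq ch <- chs | ~~ (2 * t1 < ch.1)]
      (fun j => if j \in map fst dumped then n1 else bigt s j)
  else State n1 (tau s) b chs (bigt s).

(* [step s e L s']: processing event e in state s yields s'; L is the list of
   clients reallocated out of the big channel during this processing. *)
Inductive step : state -> event -> seq client -> state -> Prop :=
| step_arrive_big s i w L chs1 :
    is_pow2 w -> ~~ active s i ->
    perm_eq L (moved_out (tau s) (cnt s).+1 (big s)) ->
    place_all (chans s) L chs1 ->
    tau_up (tau s) (cnt s).+1 <= w ->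
    step s (Arrive i w) (moved_out (tau s) (cnt s).+1 (big s))
      (State (cnt s).+1 (tau_up (tau s) (cnt s).+1)
         (rcons (stay_big (tau s) (cnt s).+1 (big s)) (i, w)) chs1
         (upd (bigt s) i (cnt s).+1))
| step_arrive_chan s i w L chs1 chs2 :
    is_pow2 w -> ~~ active s i ->
    perm_eq L (moved_out (tau s) (cnt s).+1 (big s)) ->
    place_all (chans s) L chs1 ->
    w < tau_up (tau s) (cnt s).+1 ->
    place chs1 (i, w) chs2 ->
    step s (Arrive i w) (moved_out (tau s) (cnt s).+1 (big s))
      (State (cnt s).+1 (tau_up (tau s) (cnt s).+1)
         (stay_big (tau s) (cnt s).+1 (big s)) chs2 (bigt s))
| step_depart s i c b chs :
    c.1 = i -> remove_client s c b chs ->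
    step s (Depart i) [::] (depart_finish s b chs).

Inductive reachable : state -> Prop :=
| reach_init : reachable init
| reach_step s e L s' : reachable s -> step s e L s' -> reachable s'.

(** Every client [c] on the big channel satisfies [tau <= 2 * c.2] and
    [2 * cpow2 (bigt c) <= c.2]: on an arrival it enters with
    [c.2 >= tau >= 2 * cpow2 N], and when [tau] drops (at least halving, as it
    stays a power of two) on a departure, the clients dumped from channels of
    laxity above [2 tau] get a [bigt] with [2 * cpow2 (bigt) = tau].  When [c]
    leaves the big channel on an arrival bringing the count to [N], we have
    [c.2 < cpow2 N], hence [2 * cpow2 (bigt c) < cpow2 N], and since both sides
    are powers of two, [2 * bigt c <= 2 * cpow2 (bigt c) < N]. *)
From mathcomp Require Import all_boot.
Set Implicit Arguments. Unset Strict Implicit. Unset Printing Implicit Defensive.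

Lemma mem_set_nth_lt (T : eqType) (x0 v x : T) (s : seq T) k :
  k < size s -> x \in set_nth x0 s k v -> x = v \/ x \in s.
Proof.
elim: s k => [|a s IH] [|k] //= lt_k; rewrite !inE.
- by case/orP=> [/eqP->|->]; [left | right; rewrite orbT].
- case/orP=> [/eqP->|/(IH k lt_k) [->|->]]; by [right; rewrite eqxx | left | right; rewrite orbT].
Qed.

Lemma pow2_lt_cpow2 j n : 2 ^ j < cpow2 n -> 2 ^ j < n.
Proof.
rewrite !ltnNge; apply: contra => /(up_log_min (isT : 1 < 2)) le_log.
exact: leq_pexp2l.
Qed.

Lemma double_lt_of_cpow2 m n : 2 * cpow2 m < cpow2 n -> 2 * m < n.
Proof.
rewrite {1}/cpow2 -expnS => /pow2_lt_cpow2; apply: leq_ltn_trans.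
by rewrite expnS leq_pmul2l //; apply: up_logP.
Qed.

Lemma double_pow2_leq j k : 2 ^ j < 2 ^ k -> 2 * 2 ^ j <= 2 ^ k.
Proof. by rewrite -expnS ltn_exp2l // leq_exp2l. Qed.

Lemma double_cpow2_half n : (2 * cpow2 n) %/ 2 = cpow2 n.
Proof. exact: mulKn. Qed.

Definition homogeneous (chs : seq channel) : Prop :=
  forall ch, ch \in chs -> forall c, c \in ch.2 -> c.2 = ch.1.

Lemma place_homogeneous chs c chs' :
  homogeneous chs -> place chs c chs' -> homogeneous chs'.
Proof.
move=> + P; case: P => {chs c chs'} [chs c k lt_k lax_k _ _ | chs c _] hom ch.
- case/(mem_set_nth_lt lt_k) => [-> d /=|]; last exact: hom.
  rewrite mem_rcons inE => /orP[/eqP-> //|d_k].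
  by rewrite -lax_k; apply: hom d_k; apply: mem_nth.
- rewrite mem_rcons inE => /orP[/eqP-> d /=|]; last exact: hom.
  by rewrite inE => /eqP->.
Qed.

Lemma place_all_homogeneous chs L chs' :
  homogeneous chs -> place_all chs L chs' -> homogeneous chs'.
Proof.
move=> + P; elim: P => // ? ? ? ? ? P _ IH hom.
exact/IH/(place_homogeneous hom P).
Qed.

Lemma remove_client_homogeneous s c b chs :
  homogeneous (chans s) -> remove_client s c b chs ->
  {subset b <= big s} /\ homogeneous chs.
Proof.
move=> + R; case: R => {b chs} [|k|k k' x|k].
- by move=> _ hom; split=> //; apply: mem_rem.
- move=> _ _ _ hom; split=> // ch; rewrite mem_cat.
  by case/orP=> [/mem_take|/mem_drop]; apply: hom.
- move=> lt_k c_k _ lt_k' _ lax_k' _ x_k' hom; split=> // ch.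
  have in_k := mem_nth ch0 lt_k; have in_k' := mem_nth ch0 lt_k'.
  case/mem_set_nth_lt; first by rewrite size_set_nth leq_max lt_k' orbT.
  + by move=> -> d /= /mem_rem; apply: hom.
  case/(mem_set_nth_lt lt_k) => [-> d /=|]; last exact: hom.
  rewrite mem_rcons inE => /orP[/eqP->|/mem_rem]; last exact: hom.
  by rewrite (hom _ in_k' _ x_k') lax_k'; apply: hom in_k _ c_k.
- move=> lt_k _ _ _ hom; split=> // ch.
  case/(mem_set_nth_lt lt_k) => [-> d /= /mem_rem|]; last exact: hom.
  by apply: hom; apply: mem_nth.
Qed.

Record invariant (s : state) : Prop := Invariant {
  tau_pow2 : exists k, tau s = 2 ^ k.+1;
  big_tau : forall c, c \in big s -> tau s <= 2 * c.2;
  big_bigt : forall c, c \in big s -> 2 * cpow2 (bigt s c.1) <= c.2;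
  chans_homogeneous : homogeneous (chans s) }.

Lemma tau_up_pow2 t N :
  (exists k, t = 2 ^ k.+1) -> exists k, tau_up t N = 2 ^ k.+1.
Proof. by rewrite /tau_up; case: ifP => // _ _; exists (up_log 2 N); rewrite expnS. Qed.

Lemma leq_tau_up t N : 2 * cpow2 N <= tau_up t N.
Proof. by rewrite /tau_up; case: ifP => // /negbT; rewrite -leqNgt. Qed.

Lemma mem_stay_big t N b c :
  (forall d, d \in b -> t <= 2 * d.2) ->
  c \in stay_big t N b -> c \in b /\ tau_up t N <= 2 * c.2.
Proof.
rewrite /stay_big /tau_up => b_t; case: ifP => _; last by split=> //; apply: b_t.
rewrite mem_filter -leqNgt double_cpow2_half => /andP[le_c c_b].
by rewrite leq_pmul2l.
Qed.

Lemma mem_moved_out t N b c :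
  c \in moved_out t N b -> c \in b /\ c.2 < cpow2 N.
Proof.
rewrite /moved_out; case: ifP => // _.
by rewrite mem_filter double_cpow2_half => /andP[].
Qed.

Section Arrival.

Variables (s : state) (i w : nat) (L : seq client) (chs1 : seq channel).
Hypotheses (inv_s : invariant s) (fresh : ~~ active s i)
  (placed : place_all (chans s) L chs1).
Local Notation N := (cnt s).+1.

Lemma stay_big_invariant c : c \in stay_big (tau s) N (big s) ->
  [/\ c \in big s, tau_up (tau s) N <= 2 * c.2 & 2 * cpow2 (bigt s c.1) <= c.2].
Proof.
by case/(mem_stay_big (big_tau inv_s)) => c_b le_c; split=> //; apply: big_bigt.
Qed.

Lemma arrive_big_invariant : tau_up (tau s) N <= w ->
  invariant (State N (tau_up (tau s) N) (rcons (stay_big (tau s) N (big s)) (i, w))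
                   chs1 (upd (bigt s) i N)).
Proof.
move=> le_w; split=> /=; first exact/tau_up_pow2/(tau_pow2 inv_s).
- move=> c; rewrite mem_rcons inE => /orP[/eqP-> /=|/stay_big_invariant[] //].
  exact: leq_trans le_w (leq_pmull _ _).
- move=> c; rewrite mem_rcons inE /upd => /orP[/eqP-> /=|].
    by rewrite eqxx; apply: leq_trans (leq_tau_up _ _) le_w.
  case/stay_big_invariant=> c_b _; case: eqP => // c_i.
  by move: fresh; rewrite /active negb_or => /andP[/hasPn/(_ c c_b)]; rewrite c_i eqxx.
- exact: place_all_homogeneous (chans_homogeneous inv_s) placed.
Qed.

Lemma arrive_chan_invariant chs2 : place chs1 (i, w) chs2 ->
  invariant (State N (tau_up (tau s) N) (stay_big (tau s) N (big s)) chs2 (bigt s)).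
Proof.
move=> placed2; split=> /=; first exact/tau_up_pow2/(tau_pow2 inv_s).
- by move=> c /stay_big_invariant[].
- by move=> c /stay_big_invariant[].
- exact/(place_homogeneous _ placed2)/(place_all_homogeneous _ placed)/chans_homogeneous.
Qed.

End Arrival.

Lemma depart_invariant s c b chs :
  invariant s -> remove_client s c b chs -> invariant (depart_finish s b chs).
Proof.
move=> [[k t_pow2] b_t b_bigt hom] removed.
have [b_big hom'] := remove_client_homogeneous hom removed.
rewrite /depart_finish; case: ltnP => [lt_tau|_]; last first.
  by split=> //= [|d /b_big|d /b_big]; [exists k | apply: b_t | apply: b_bigt].
set t1 := 2 * cpow2 (cnt s).-1 in lt_tau *.
set dumped := flatten _.
have le_tau : 2 * t1 <= tau s.
  by move: lt_tau; rewrite /t1 /cpow2 -expnS t_pow2; apply: double_pow2_leq.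
have dumped_lax d : d \in dumped -> 2 * t1 < d.2.
  case/flatten_mapP=> ch; rewrite mem_filter => /andP[lax_ch ch_chs] d_ch.
  by rewrite (hom' _ ch_chs _ d_ch).
split=> /=; first by exists (up_log 2 (cnt s).-1); rewrite /t1 /cpow2 expnS.
- move=> d; rewrite mem_cat => /orP[/b_big d_b|/dumped_lax/ltnW le_d].
    exact: leq_trans (leq_pmull _ _) (leq_trans le_tau (b_t _ d_b)).
  exact: leq_trans (leq_pmull _ _) (leq_trans le_d (leq_pmull _ _)).
- move=> d; rewrite mem_cat => /orP[/b_big d_b|d_dumped].
    case: ifP => _; last exact: b_bigt.
    by rewrite -(leq_pmul2l (isT : 0 < 2)); apply: leq_trans le_tau (b_t _ d_b).
  rewrite (map_f fst d_dumped) -/t1.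
  by apply: leq_trans (ltnW (dumped_lax _ d_dumped)); apply: leq_pmull.
- by move=> ch; rewrite mem_filter => /andP[_]; apply: hom'.
Qed.

Lemma reachable_invariant s : reachable s -> invariant s.
Proof.
elim=> {s} [|s e L s' _ inv_s step_s]; first by split=> //; exists 0.
case: step_s inv_s => {s e L s'}
  [t i w L chs1 _ fresh _ placed le_w | t i w L chs1 chs2 _ _ _ placed _ placed2
  | t i c b chs _ removed] inv_t.
- exact (arrive_big_invariant inv_t fresh placed le_w).
- exact (arrive_chan_invariant inv_t placed placed2).
- exact (depart_invariant inv_t removed).
Qed.

Lemma step_moved_out s e L s' c :
  step s e L s' -> c \in L -> c \in big s /\ c.2 < cpow2 (cnt s').
Proof. by case=> // *; apply: mem_moved_out; eassumption. Qed.

Theorem lemma1 (s : state) (e : event) (L : seq client) (s' : state) (c : client) :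
  reachable s -> step s e L s' -> c \in L -> 2 * bigt s c.1 <= cnt s'.
Proof.
move=> /reachable_invariant inv_s step_s /(step_moved_out step_s) [c_big lt_c].
apply/ltnW/double_lt_of_cpow2.
exact: leq_ltn_trans (big_bigt inv_s c_big) lt_c.
Qed.
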